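(* Let $p,q$ be positive integers and $A\in\mathbb{R}^{(p+q)\times(p+q)}$. Let $J=\begin{bmatrix}E&0\\0&-I\end{bmatrix}$, where $E$ is the $p\times p$ matrix with all entries $1$ and $I$ is the $q\times q$ identity. If there exists $\lambda\ge0$ such that $A^\top JA-\lambda J$ is positive semidefinite, and the transposes of the first $p$ rows of $A$ belong to $L(p,q)$, then $A$ is a positive operator of $M(p,q)$, i.e. $A\,M(p,q)\subseteq M(p,q)$.
   Context: Let $e=(1,\dots,1)\in\mathbb{R}^p$. Identify $\mathbb{R}^p\times\mathbb{R}^q$ with $\mathbb{R}^{p+q}$ (column vectors) with the standard inner product $\langle\cdot,\cdot\rangle$ and Euclidean norm $\|\cdot\|$. Define \[L(p,q)=\{(x,u)\in\mathbb{R}^p\times\mathbb{R}^q:\ x\ge\|u\|e\}\] (componentwise inequality) and \[M(p,q)=\{(x,u)\in\mathbb{R}^p\times\mathbb{R}^q:\ \langle x,e\rangle\ge\|u\|,\ x\ge 0\}.\] A matrix $A$ is a positive operator of a cone $C$ if $AC\subseteq C$. *)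

From HB Require Import structures.
From mathcomp Require Import all_boot all_order all_algebra.
From mathcomp Require Import reals.
Set Implicit Arguments. Unset Strict Implicit. Unset Printing Implicit Defensive.
Import Order.TTheory GRing.Theory Num.Theory.
Local Open Scope ring_scope.

Definition enorm (R : realType) (q : nat) (u : 'cV[R]_q) : R :=
  Num.sqrt (\sum_(i < q) u i 0 ^+ 2).

Definition inL (R : realType) (p q : nat) (v : 'cV[R]_(p + q)) : Prop :=
  forall i : 'I_p, enorm (dsubmx v) <= usubmx v i 0.

Definition inM (R : realType) (p q : nat) (v : 'cV[R]_(p + q)) : Prop :=
  enorm (dsubmx v) <= \sum_(i < p) usubmx v i 0 /\
  forall i : 'I_p, 0 <= usubmx v i 0.

Definition Jmx (R : realType) (p q : nat) : 'M[R]_(p + q) :=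
  block_mx (const_mx 1) 0 0 (- 1%:M).

Definition psd (R : realType) (n : nat) (S : 'M[R]_n) : Prop :=
  forall x : 'cV[R]_n, 0 <= (x^T *m S *m x) 0 0.

Definition positive_operator (R : realType) (n : nat)
  (C : 'cV[R]_n -> Prop) (A : 'M[R]_n) : Prop :=
  forall v, C v -> C (A *m v).

From HB Require Import structures.
From mathcomp Require Import all_boot all_order all_algebra.
From mathcomp Require Import reals.
From mathcomp Require Import ring lra.
Set Implicit Arguments. Unset Strict Implicit. Unset Printing Implicit Defensive.
Import Order.TTheory GRing.Theory Num.Theory.
Local Open Scope ring_scope.

(* Write v = (x, u). The quadratic form of J is v^T J v = <x, e>^2 - |u|^2, so
   for a vector with <x, e> >= 0 membership in M(p, q) amounts to v^T J v >= 0
   and x >= 0. Cauchy-Schwarz shows that L(p, q) lies in the dual cone of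
   M(p, q), hence the first p coordinates of A v are nonnegative when
   v is in M(p, q). Finally (A v)^T J (A v) >= lambda v^T J v >= 0 by the
   semidefiniteness hypothesis. *)

Lemma sum_mul_sqr_le (R : realFieldType) n (b u : 'I_n -> R) :
  (\sum_i b i * u i) ^+ 2 <= (\sum_i b i ^+ 2) * (\sum_i u i ^+ 2).
Proof.
(* Lagrange's identity: the difference is half of \sum_(i, j) (b i u j - b j u i)^2. *)
set F := fun i j => b i ^+ 2 * u j ^+ 2 - (b i * u i) * (b j * u j).
have sumF_sym_ge0 : 0 <= \sum_i \sum_j (F i j + F j i).
  apply: sumr_ge0 => i _; apply: sumr_ge0 => j _.
  have -> : F i j + F j i = (b i * u j - b j * u i) ^+ 2 by rewrite /F; ring.
  exact: sqr_ge0.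
have sumF_symE : \sum_i \sum_j (F i j + F j i) =
    \sum_i \sum_j F i j + \sum_i \sum_j F i j.
  rewrite [X in _ = _ + X]exchange_big -big_split /=.
  by apply: eq_bigr => i _; rewrite big_split.
have sumFE : \sum_i \sum_j F i j =
    (\sum_i b i ^+ 2) * (\sum_i u i ^+ 2) - (\sum_i b i * u i) ^+ 2.
  rewrite expr2 !big_distrlr /= -sumrB; apply: eq_bigr => i _.
  by rewrite -sumrB.
rewrite sumF_symE sumFE in sumF_sym_ge0; lra.
Qed.

Section Cones.
Variable R : realType.

Definition qform n (S : 'M[R]_n) (v : 'cV[R]_n) : R := (v^T *m S *m v) 0 0.

Lemma enorm_ge0 n (u : 'cV[R]_n) : 0 <= enorm u.
Proof. exact: sqrtr_ge0. Qed.

Lemma enorm_sqr n (u : 'cV[R]_n) : enorm u ^+ 2 = \sum_i u i 0 ^+ 2.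
Proof. by rewrite sqr_sqrtr //; apply: sumr_ge0 => i _; apply: sqr_ge0. Qed.

Lemma ler_dot_enorm n (b u : 'cV[R]_n) :
  `|\sum_i b i 0 * u i 0| <= enorm b * enorm u.
Proof.
rewrite -ler_sqr ?nnegrE ?mulr_ge0 ?enorm_ge0 //.
by rewrite real_normK ?num_real // exprMn !enorm_sqr sum_mul_sqr_le.
Qed.

Lemma psd_qform_mulmx n (A S : 'M[R]_n) (lambda : R) (v : 'cV[R]_n) :
  psd (A^T *m S *m A - lambda *: S) -> lambda * qform S v <= qform S (A *m v).
Proof.
move/(_ v); rewrite /qform mulmxBr mulmxBl -scalemxAr -scalemxAl trmx_mul !mulmxA.
by rewrite mxE [X in _ + X]mxE [X in - X]mxE subr_ge0.
Qed.

Variables p q : nat.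

Lemma dot_usub_dsub (a v : 'cV[R]_(p + q)) :
  (a^T *m v) 0 0 = \sum_i usubmx a i 0 * usubmx v i 0
                 + \sum_k dsubmx a k 0 * dsubmx v k 0.
Proof.
by rewrite mxE big_split_ord; congr (_ + _); apply: eq_bigr => i _; rewrite !mxE.
Qed.

Lemma qform_Jmx (w : 'cV[R]_(p + q)) :
  qform (Jmx R p q) w = (\sum_i usubmx w i 0) ^+ 2 - enorm (dsubmx w) ^+ 2.
Proof.
rewrite /qform -{1 2}[w]vsubmxK tr_col_mx /Jmx mul_row_block ?mul0mx ?mulmx0.
rewrite ?addr0 ?add0r mul_row_col mulmxN mulmx1 mulNmx.
rewrite !mxE enorm_sqr expr2 big_distrlr /=; congr (_ - _).
  apply: eq_bigr => i _; rewrite !mxE mulr_suml.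
  by apply: eq_bigr => j _; rewrite !mxE mulr1 mulrC.
by apply: eq_bigr => k _; rewrite !mxE expr2.
Qed.

Lemma inM_qform_Jmx_ge0 (v : 'cV[R]_(p + q)) : inM v -> 0 <= qform (Jmx R p q) v.
Proof.
move=> [norm_le _]; rewrite qform_Jmx subr_ge0.
by rewrite ler_sqr ?nnegrE ?enorm_ge0 // (le_trans (enorm_ge0 _) norm_le).
Qed.

Lemma inM_of_qform_Jmx (w : 'cV[R]_(p + q)) :
  0 <= qform (Jmx R p q) w -> (forall i, 0 <= usubmx w i 0) -> inM w.
Proof.
move=> qform_ge0 usub_ge0; split=> //.
have sum_ge0 : 0 <= \sum_i usubmx w i 0 by apply: sumr_ge0.
by rewrite -ler_sqr ?nnegrE ?enorm_ge0 // -subr_ge0 -qform_Jmx.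
Qed.

Lemma inL_dot_inM_ge0 (a v : 'cV[R]_(p + q)) :
  inL a -> inM v -> 0 <= (a^T *m v) 0 0.
Proof.
move=> aL [norm_le usub_ge0]; rewrite dot_usub_dsub.
have usub_ge :
    enorm (dsubmx a) * \sum_i usubmx v i 0 <= \sum_i usubmx a i 0 * usubmx v i 0.
  by rewrite mulr_sumr; apply: ler_sum => i _; apply: ler_wpM2r.
have dsub_ge := ler_dot_enorm (dsubmx a) (dsubmx v).
rewrite ler_norml in dsub_ge; case/andP: dsub_ge => dsub_ge _.
have := ler_wpM2l (enorm_ge0 (dsubmx a)) norm_le; lra.
Qed.

End Cones.

Theorem mainTheorem3 (R : realType) (p q : nat) (hp : (0 < p)%N) (hq : (0 < q)%N)
  (A : 'M[R]_(p + q)) :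
  (exists lambda : R, 0 <= lambda /\
     psd (A^T *m Jmx R p q *m A - lambda *: Jmx R p q)) ->
  (forall i : 'I_p, inL (row (lshift q i) A)^T) ->
  positive_operator (@inM R p q) A.
Proof.
move=> [lambda [lambda_ge0 A_psd]] rowsL v vM.
apply: inM_of_qform_Jmx => [|i].
  apply: le_trans (psd_qform_mulmx v A_psd).
  exact: mulr_ge0 lambda_ge0 (inM_qform_Jmx_ge0 vM).
have := inL_dot_inM_ge0 (rowsL i) vM.
by rewrite trmxK -row_mul mxE [usubmx _ _ _]mxE.
Qed.
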